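(* Let $H$ be a graph and $(T,(V_t)_{t\in T})$ a rooted tree-decomposition of $H$ of finite adhesion. Suppose there is an edge $e=ts$ of $T$ with $t<_T s$ and a set $Y\subseteq V_e$ such that $(H\uparrow e)-Y$ has at least two components $C_1,C_2$ with $V(C_1)\cap V_e\neq\emptyset\neq V(C_2)\cap V_e$ and $V(C_2)\cap(V_s\setminus V_e)\neq\emptyset$. Then $(T,(V_t)_{t\in T})$ is not lean.
   Context: A tree-decomposition $(T,(V_t)_{t\in T})$ of $H$ consists of a tree $T$ and bags $V_t\subseteq V(H)$ covering all vertices and edges of $H$ such that for each vertex $v$ the nodes $t$ with $v\in V_t$ form a subtree. For an edge $e=st$ of $T$, $V_e:=V_s\cap V_t$ is its adhesion set; the decomposition has finite adhesion if all $V_e$ are finite. In a rooted tree-decomposition, $T$ has a root $r$ and $\le_T$ is the tree-order ($s\le_T t$ iff $s$ lies on the $r$–$t$ path in $T$). For an edge $e$ of $T$, $T_e$ is the component of $T-e$ not containing $r$, and $H\uparrow e$ is the subgraph of $H$ induced on $\bigcup_{u\in T_e}V_u$. The tree-decomposition is lean if for every two (not necessarily distinct) nodes $s,t$ and all $Z_s\subseteq V_s$, $Z_t\subseteq V_t$ with $|Z_s|=|Z_t|=:\ell\in\mathbb N$, either $H$ contains $\ell$ pairwise disjoint $Z_s$–$Z_t$ paths or some edge $e$ of the $s$–$t$ path in $T$ has $|V_e|<\ell$. *)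

From Stdlib Require Import List Arith.
Import ListNotations.

Record graph := Graph {
  vx : Type;
  adj : vx -> vx -> Prop;
  adj_sym : forall x y, adj x y -> adj y x;
  adj_irr : forall x, ~ adj x x }.

Fixpoint chain {G : graph} (p : list (vx G)) : Prop :=
  match p with
  | x :: ((y :: _) as q) => adj G x y /\ chain q
  | _ => True
  end.

Definition is_path (G : graph) (p : list (vx G)) : Prop :=
  p <> [] /\ NoDup p /\ chain p.

Definition path_from_to (G : graph) (a b : vx G) (p : list (vx G)) : Prop :=
  is_path G p /\ hd_error p = Some a /\ last p a = b.

Definition is_cycle (G : graph) (p : list (vx G)) : Prop :=
  3 <= length p /\ NoDup p /\ chain p /\
  exists a b, hd_error p = Some a /\ last p a = b /\ adj G b a.

Definition connected_graph (G : graph) : Prop :=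
  forall x y : vx G, exists p, path_from_to G x y p.

Definition connected_set (G : graph) (X : vx G -> Prop) : Prop :=
  forall x y, X x -> X y ->
    exists p, path_from_to G x y p /\ forall z, In z p -> X z.

Definition is_tree (T : graph) : Prop :=
  connected_graph T /\ forall p, ~ is_cycle T p.

Definition tree_decomposition (H T : graph) (bag : vx T -> vx H -> Prop) : Prop :=
  is_tree T /\
  (forall v, exists t, bag t v) /\
  (forall u v, adj H u v -> exists t, bag t u /\ bag t v) /\
  (forall v, connected_set T (fun t => bag t v)).

Definition adhesion {H T : graph} (bag : vx T -> vx H -> Prop) (t s : vx T)
  : vx H -> Prop := fun v => bag t v /\ bag s v.

Definition finite_set {A : Type} (X : A -> Prop) : Prop :=
  exists l : list A, forall x, X x -> In x l.

Definition finite_adhesion {H T : graph} (bag : vx T -> vx H -> Prop) : Prop :=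
  forall t s, adj T t s -> finite_set (adhesion bag t s).

Definition card_lt {A : Type} (X : A -> Prop) (l : nat) : Prop :=
  forall xs : list A, NoDup xs -> (forall x, In x xs -> X x) -> length xs < l.

Definition tree_le (T : graph) (r s t : vx T) : Prop :=
  exists p, path_from_to T r t p /\ In s p.
Definition tree_lt (T : graph) (r s t : vx T) : Prop :=
  tree_le T r s t /\ s <> t.

Definition avoids_edge {G : graph} (a b : vx G) (p : list (vx G)) : Prop :=
  forall p1 p2 x y, p = p1 ++ x :: y :: p2 ->
    ~ ((x = a /\ y = b) \/ (x = b /\ y = a)).

Definition conn_minus_edge (T : graph) (a b x y : vx T) : Prop :=
  exists p, path_from_to T x y p /\ avoids_edge a b p.

(* T_e : the component of T - e not containing the root r, e = ts *)
Definition T_up (T : graph) (r t s : vx T) (u : vx T) : Prop :=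
  (conn_minus_edge T t s u t \/ conn_minus_edge T t s u s) /\
  ~ conn_minus_edge T t s u r.

(* vertex set of H↑e = union of the bags of nodes of T_e *)
Definition H_up {H T : graph} (bag : vx T -> vx H -> Prop) (r t s : vx T)
  : vx H -> Prop := fun v => exists u, T_up T r t s u /\ bag u v.

(* C is (the vertex set of) a component of the subgraph H[X] induced on X *)
Definition is_component (H : graph) (X C : vx H -> Prop) : Prop :=
  (exists v, C v) /\ (forall v, C v -> X v) /\ connected_set H C /\
  (forall u v, C u -> X v -> adj H u v -> C v).

Definition AB_path (H : graph) (A B : vx H -> Prop) (p : list (vx H)) : Prop :=
  is_path H p /\
  exists a b, hd_error p = Some a /\ last p a = b /\ A a /\ B b /\
    (forall x, In x p -> A x -> x = a) /\ (forall x, In x p -> B x -> x = b).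

Definition disjoint_AB_paths (H : graph) (A B : vx H -> Prop) (l : nat) : Prop :=
  exists P : list (list (vx H)), length P = l /\
    (forall p, In p P -> AB_path H A B p) /\
    (forall i j, i < l -> j < l -> i <> j ->
       forall x, In x (nth i P []) -> ~ In x (nth j P [])).

Definition lean (H T : graph) (bag : vx T -> vx H -> Prop) : Prop :=
  forall (s t : vx T) (Zs Zt : list (vx H)),
    NoDup Zs -> NoDup Zt ->
    (forall z, In z Zs -> bag s z) -> (forall z, In z Zt -> bag t z) ->
    length Zs = length Zt ->
    disjoint_AB_paths H (fun z => In z Zs) (fun z => In z Zt) (length Zs) \/
    exists p, path_from_to T s t p /\
      exists p1 p2 a b, p = p1 ++ a :: b :: p2 /\
        card_lt (adhesion bag a b) (length Zs).

(* Let W := V_e \ V(C1), which is finite, and pick x in C2 inside V_s \ V_e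
   and v1 in C1 inside V_e.  Then x :: W and v1 :: W are sets of equal size in
   the single bag V_s, so leanness (applied with s = t, where the s–t path has
   no edge at all) yields |W| + 1 disjoint (x :: W)–(v1 :: W) paths.  Every
   edge leaving C2 starts in V_e or ends in Y, since a vertex of H↑e adjacent
   to a vertex outside H↑e lies in a bag on both sides of e.  Hence W separates
   x from v1, every such path starts in W, and there are at most |W| of them. *)

From Stdlib Require Import List PeanoNat Lia Classical Relations.
Import ListNotations.

Lemma last_indep {A} (l : list A) d d' : l <> [] -> last l d = last l d'.
Proof.
  induction l as [|a [|b l] IH]; intros Hn; [congruence|reflexivity|].
  apply IH. discriminate.
Qed.

Lemma last_app_cons {A} (l1 l2 : list A) x d :
  last (l1 ++ x :: l2) d = last (x :: l2) d.
Proof.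
  induction l1 as [|a l1 IH]; [reflexivity|].
  rewrite <- app_comm_cons, <- IH. now destruct l1.
Qed.

Lemma last_In {A} (l : list A) d : l <> [] -> In (last l d) l.
Proof.
  intros Hn. rewrite (app_removelast_last d Hn) at 2.
  apply in_or_app. right. now left.
Qed.

Lemma chain_app_r {G : graph} (l1 l2 : list (vx G)) : chain (l1 ++ l2) -> chain l2.
Proof.
  induction l1 as [|a [|b l1] IH]; simpl; auto.
  - now destruct l2.
  - intros [_ Hc]. exact (IH Hc).
Qed.

Lemma avoids_edge_app_r {G : graph} (a b : vx G) l1 l2 :
  avoids_edge a b (l1 ++ l2) -> avoids_edge a b l2.
Proof.
  intros Ha p1 p2 x y E. apply (Ha (l1 ++ p1) p2). now rewrite E, app_assoc.
Qed.

Lemma path_from_to_refl (G : graph) (x : vx G) p : path_from_to G x x p -> p = [x].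
Proof.
  intros [[_ [Hnd _]] [Hh Hl]].
  destruct p as [|x0 [|y q]]; inversion Hh; subst x0; [reflexivity|].
  exfalso. inversion Hnd as [|? ? Hx _]. apply Hx.
  change (last (y :: q) x = x) in Hl. rewrite <- Hl at 1. apply last_In. discriminate.
Qed.

Lemma NoDup_filter_ex {A} (P : A -> Prop) (l : list A) :
  exists l', NoDup l' /\ forall z, In z l' <-> In z l /\ P z.
Proof.
  induction l as [|a l [l' [Hn Hi]]].
  - exists []. split; [constructor|]. simpl; tauto.
  - destruct (classic (P a /\ ~ In a l')) as [[Pa Na]|Hno].
    + exists (a :: l'). split; [now constructor|].
      intros z. simpl. rewrite Hi. split; [intros [<-|Hz]; tauto|].
      intros [[<-|Hz] Pz]; auto.
    + exists l'. split; [exact Hn|]. intros z. rewrite Hi. simpl. split; [tauto|].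
      intros [[<-|Hz] Pz]; [|auto].
      apply NNPP. intros Nz. apply Hno. split; [exact Pz|].
      intros Iz. apply Nz, Hi, Iz.
Qed.

Lemma finite_set_enum {A} (X : A -> Prop) :
  finite_set X -> exists l, NoDup l /\ forall z, In z l <-> X z.
Proof.
  intros [l0 Hl0]. destruct (NoDup_filter_ex X l0) as [l [Hn Hi]].
  exists l. split; [exact Hn|]. intros z. rewrite Hi. split; [tauto|]. auto.
Qed.

Section EdgeDeletion.

Variables (G : graph) (a b : vx G).

Definition off_edge (x y : vx G) : Prop :=
  adj G x y /\ ~ ((x = a /\ y = b) \/ (x = b /\ y = a)).

Lemma off_edge_sym x y : off_edge x y -> off_edge y x.
Proof.
  intros [Hxy Hn]. split; [now apply adj_sym|].
  intros [[-> ->]|[-> ->]]; tauto.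
Qed.

Lemma off_edge_reach_sym x y :
  clos_refl_trans _ off_edge x y -> clos_refl_trans _ off_edge y x.
Proof.
  induction 1; [apply rt_step, off_edge_sym; assumption | apply rt_refl |].
  eapply rt_trans; eassumption.
Qed.

Lemma chain_off_edge_reach p x :
  chain p -> hd_error p = Some x -> avoids_edge a b p ->
  forall d, clos_refl_trans _ off_edge x (last p d).
Proof.
  revert x. induction p as [|x0 [|y p] IH]; intros x Hc Hh Ha d;
    inversion Hh; subst x0; [apply rt_refl|].
  destruct Hc as [Hxy Hc].
  apply rt_trans with y.
  - apply rt_step. split; [exact Hxy|]. exact (Ha [] p x y eq_refl).
  - apply IH; [exact Hc | reflexivity |].
    exact (avoids_edge_app_r a b [x] _ Ha).
Qed.

(* Prepending a vertex that already lies on the path cuts the path back to it. *)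
Lemma off_edge_reach_path x y :
  clos_refl_trans _ off_edge x y ->
  exists p, path_from_to G x y p /\ avoids_edge a b p.
Proof.
  intros Hr. apply clos_rt_rt1n in Hr.
  induction Hr as [x|x y z [Hxy Hn] _ [p [[[Hne [Hnd Hc]] [Hh Hl]] Ha]]].
  { exists [x]. repeat split; try easy.
    - repeat constructor. easy.
    - intros [|c [|d p1]] p2 x0 y0 E; inversion E. }
  destruct (classic (In x p)) as [Hin|Hin].
  - destruct (in_split _ _ Hin) as [p1 [p2 ->]].
    exists (x :: p2). repeat split; try easy.
    + exact (NoDup_app_remove_l _ _ Hnd).
    + exact (chain_app_r _ _ Hc).
    + rewrite <- Hl, last_app_cons. apply last_indep. discriminate.
    + exact (avoids_edge_app_r a b _ _ Ha).
  - destruct p as [|y0 p]; [congruence|]. inversion Hh; subst y0.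
    exists (x :: y :: p). repeat split; try easy.
    + now constructor.
    + rewrite <- Hl. apply (last_indep (y :: p)). discriminate.
    + intros [|c p1] p2 x0 y0 E; injection E as -> E; [now subst|].
      exact (Ha p1 p2 x0 y0 E).
Qed.

Lemma conn_minus_edge_iff x y :
  conn_minus_edge G a b x y <-> clos_refl_trans _ off_edge x y.
Proof.
  split.
  - intros [p [[[_ [_ Hc]] [Hh Hl]] Ha]]. rewrite <- Hl.
    exact (chain_off_edge_reach p x Hc Hh Ha x).
  - exact (off_edge_reach_path x y).
Qed.

End EdgeDeletion.

Lemma T_up_off_edge_closed (T : graph) (r t s u m : vx T) :
  T_up T r t s u -> clos_refl_trans _ (off_edge T t s) u m -> T_up T r t s m.
Proof.
  unfold T_up. rewrite !conn_minus_edge_iff.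
  intros [Hts Hr] Hum. pose proof (off_edge_reach_sym T t s u m Hum) as Hmu.
  split.
  - destruct Hts; [left|right]; eapply rt_trans; eassumption.
  - intros Hmr. apply Hr. eapply rt_trans; eassumption.
Qed.

(* The nodes whose bags contain v form a subtree; a path inside it from T_e to
   the rest of T must use the edge ts. *)
Lemma bag_across_edge (H T : graph) (bag : vx T -> vx H -> Prop) (r t s u m : vx T)
  (v : vx H) :
  tree_decomposition H T bag -> T_up T r t s u -> ~ T_up T r t s m ->
  bag u v -> bag m v -> adhesion bag t s v.
Proof.
  intros [_ [_ [_ Hsub]]] Hu Hm Bu Bm.
  destruct (Hsub v u m Bu Bm) as [q [[[_ [_ Hc]] [Hh Hl]] Hin]].
  apply NNPP. intros Hno. apply Hm.
  apply (T_up_off_edge_closed T r t s u m Hu).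
  rewrite <- Hl. apply (chain_off_edge_reach T t s q u Hc Hh).
  intros p1 p2 x y E Hxy. apply Hno.
  assert (In x q /\ In y q) as [Ix Iy].
  { rewrite E. split; apply in_or_app; right; simpl; auto. }
  destruct Hxy as [[-> ->]|[-> ->]]; split; auto.
Qed.

Lemma chain_closed_in (G : graph) (P Q : vx G -> Prop) :
  (forall u v, P u -> Q v -> adj G u v -> P v) ->
  forall p h, chain p -> (forall z, In z p -> Q z) ->
  hd_error p = Some h -> P h -> forall z, In z p -> P z.
Proof.
  intros Hcl p. induction p as [|a [|b p] IH]; intros h Hc HQ Hh Ph z Hz;
    inversion Hh; subst a; destruct Hz as [<-|Hz]; auto; [destruct Hz|].
  destruct Hc as [Hab Hc].
  apply (IH b Hc); auto.
  - intros y Hy. apply HQ. now right.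
  - apply (Hcl h b Ph); [apply HQ; right; now left | exact Hab].
Qed.

Lemma chain_exit_edge (G : graph) (P : vx G -> Prop) p h d :
  chain p -> hd_error p = Some h -> P h -> ~ P (last p d) ->
  exists u w, In u p /\ In w p /\ P u /\ ~ P w /\ adj G u w.
Proof.
  revert h. induction p as [|a [|b p] IH]; intros h Hc Hh Ph Hl;
    inversion Hh; subst a; [contradiction|].
  destruct Hc as [Hab Hc].
  destruct (classic (P b)) as [Pb|Pb].
  - destruct (IH b Hc eq_refl Pb Hl) as [u [w [Iu [Iw Huw]]]].
    exists u, w. repeat split; try apply Huw; right; assumption.
  - exists h, b. simpl. tauto.
Qed.

Lemma component_incl (H : graph) (X C1 C2 : vx H -> Prop) u :
  is_component H X C1 -> is_component H X C2 -> C1 u -> C2 u ->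
  forall v, C1 v -> C2 v.
Proof.
  intros [_ [S1 [Cn1 _]]] [_ [_ [_ Cl2]]] C1u C2u v C1v.
  destruct (Cn1 u v C1u C1v) as [p [[[Hne [_ Hc]] [Hh Hl]] Hin]].
  rewrite <- Hl.
  apply (chain_closed_in H C2 X Cl2 p u Hc (fun z Hz => S1 z (Hin z Hz)) Hh C2u).
  now apply last_In.
Qed.

Lemma components_disjoint (H : graph) (X C1 C2 : vx H -> Prop) :
  is_component H X C1 -> is_component H X C2 -> ~ (forall v, C1 v <-> C2 v) ->
  forall v, C1 v -> ~ C2 v.
Proof.
  intros Hc1 Hc2 Hneq u C1u C2u. apply Hneq. intros v. split.
  - exact (component_incl H X C1 C2 u Hc1 Hc2 C1u C2u v).
  - exact (component_incl H X C2 C1 u Hc2 Hc1 C2u C1u v).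
Qed.

Section ComponentsAboveEdge.

Variables (H T : graph) (bag : vx T -> vx H -> Prop) (r t s : vx T).
Variables (Y C : vx H -> Prop).
Hypothesis Htd : tree_decomposition H T bag.
Hypothesis HC : is_component H (fun v => H_up bag r t s v /\ ~ Y v) C.

Lemma component_exit_edge u w :
  C u -> ~ C w -> adj H u w -> adhesion bag t s u \/ Y w.
Proof.
  intros Cu Cw Huw. destruct HC as [_ [HCX [_ HCcl]]].
  destruct (classic (Y w)) as [Yw|Yw]; [now right|]. left.
  destruct (HCX u Cu) as [[u' [Tu' Bu']] _].
  destruct Htd as [_ [_ [Hedge _]]].
  destruct (Hedge u w Huw) as [m [Bmu Bmw]].
  apply (bag_across_edge H T bag r t s u' m u Htd Tu'); [|exact Bu' | exact Bmu].
  intros Tm. apply Cw. apply (HCcl u w Cu); [|exact Huw].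
  split; [exists m; now split | exact Yw].
Qed.

Lemma chain_leaving_component p h d :
  chain p -> hd_error p = Some h -> C h -> ~ C (last p d) ->
  exists z, In z p /\ (C z /\ adhesion bag t s z \/ Y z).
Proof.
  intros Hc Hh Ch Hl.
  destruct (chain_exit_edge H C p h d Hc Hh Ch Hl) as [u [w [Iu [Iw [Cu [Cw Huw]]]]]].
  destruct (component_exit_edge u w Cu Cw Huw) as [Au|Yw].
  - exists u. auto.
  - exists w. auto.
Qed.

End ComponentsAboveEdge.

Lemma chain_between_components_meets_adhesion (H T : graph) (bag : vx T -> vx H -> Prop)
  (r t s : vx T) (Y C1 C2 : vx H -> Prop) :
  tree_decomposition H T bag -> (forall v, Y v -> adhesion bag t s v) ->
  is_component H (fun v => H_up bag r t s v /\ ~ Y v) C1 ->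
  is_component H (fun v => H_up bag r t s v /\ ~ Y v) C2 ->
  ~ (forall v, C1 v <-> C2 v) ->
  forall p h d, chain p -> hd_error p = Some h -> C2 h -> C1 (last p d) ->
  exists z, In z p /\ adhesion bag t s z /\ ~ C1 z.
Proof.
  intros Htd HY Hc1 Hc2 Hneq p h d Hc Hh C2h C1l.
  pose proof (components_disjoint H _ C1 C2 Hc1 Hc2 Hneq) as Hdisj.
  destruct (chain_leaving_component H T bag r t s Y C2 Htd Hc2 p h d Hc Hh C2h)
    as [z [Iz [[C2z Az]|Yz]]]; [exact (Hdisj _ C1l) | |].
  - exists z. split; [exact Iz|]. split; [exact Az|].
    intros C1z. exact (Hdisj z C1z C2z).
  - exists z. split; [exact Iz|]. split; [exact (HY z Yz)|].
    intros C1z. destruct Hc1 as [_ [HX _]]. exact (proj2 (HX z C1z) Yz).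
Qed.

Lemma AB_path_starts_in_separator (G : graph) (a0 b0 : vx G) (S : list (vx G)) :
  ~ In a0 S ->
  (forall q, chain q -> hd_error q = Some a0 -> last q a0 = b0 ->
     exists z, In z q /\ In z S) ->
  forall p a, AB_path G (fun z => In z (a0 :: S)) (fun z => In z (b0 :: S)) p ->
  hd_error p = Some a -> In a S.
Proof.
  intros Ha0 Hsep p a [[Hne [_ Hc]] [a' [b [Hh [Hl [Aa [Bb [HA _]]]]]]]] Ha.
  rewrite Ha in Hh. injection Hh as <-.
  destruct Aa as [<-|Sa]; [exfalso|exact Sa].
  destruct Bb as [<-|Sb].
  - destruct (Hsep p Hc Ha Hl) as [z [Iz Sz]].
    rewrite <- (HA z Iz (or_intror Sz)) in Ha0. contradiction.
  - assert (Ib : In b p) by (rewrite <- Hl; now apply last_In).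
    rewrite <- (HA b Ib (or_intror Sb)) in Ha0. contradiction.
Qed.

(* Disjoint paths have distinct first vertices. *)
Lemma disjoint_AB_paths_le (G : graph) (A B : vx G -> Prop) (S : list (vx G)) n :
  (forall p a, AB_path G A B p -> hd_error p = Some a -> In a S) ->
  disjoint_AB_paths G A B n -> n <= length S.
Proof.
  intros Hstart [P [HlP [HAB Hdisj]]].
  assert (Hnd : NoDup (map (@hd_error _) P)).
  { apply (NoDup_nth _ None). rewrite length_map. intros i j Hi Hj E.
    assert (Hnth : forall k, nth k (map (@hd_error _) P) None = hd_error (nth k P []))
      by (intros k; exact (map_nth _ P [] k)).
    rewrite !Hnth in E.
    rewrite HlP in Hi, Hj.
    destruct (Nat.eq_dec i j) as [|Hij]; [assumption|exfalso].
    destruct (nth i P []) as [|a pi] eqn:Ei.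
    - destruct (HAB (nth i P [])) as [[Hne _] _]; [apply nth_In; lia|congruence].
    - destruct (nth j P []) as [|a' pj] eqn:Ej; [discriminate|].
      injection E as <-. apply (Hdisj i j Hi Hj Hij a); [rewrite Ei|rewrite Ej]; now left. }
  assert (Hincl : incl (map (@hd_error _) P) (map Some S)).
  { intros o Ho. apply in_map_iff in Ho as [p [<- Ip]].
    destruct (HAB p Ip) as [[Hne _] _].
    destruct p as [|a p]; [congruence|].
    simpl. apply in_map, (Hstart (a :: p)); [exact (HAB _ Ip)|reflexivity]. }
  pose proof (NoDup_incl_length Hnd Hincl) as Hlen.
  rewrite !length_map, HlP in Hlen. exact Hlen.
Qed.

Theorem lemma3p4 (H T : graph) (bag : vx T -> vx H -> Prop) (r : vx T) :
  tree_decomposition H T bag ->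
  finite_adhesion bag ->
  forall (t s : vx T), adj T t s -> tree_lt T r t s ->
  forall (Y : vx H -> Prop), (forall v, Y v -> adhesion bag t s v) ->
  forall (C1 C2 : vx H -> Prop),
    is_component H (fun v => H_up bag r t s v /\ ~ Y v) C1 ->
    is_component H (fun v => H_up bag r t s v /\ ~ Y v) C2 ->
    ~ (forall v, C1 v <-> C2 v) ->
    (exists v, C1 v /\ adhesion bag t s v) ->
    (exists v, C2 v /\ adhesion bag t s v) ->
    (exists v, C2 v /\ bag s v /\ ~ adhesion bag t s v) ->
    ~ lean H T bag.
Proof.
  intros Htd Hfin t s Hts _ Y HY C1 C2 Hc1 Hc2 Hneq [v1 [C1v1 Av1]] _
    [x [C2x [Bx NAx]]] Hlean.
  destruct (finite_set_enum (fun z => adhesion bag t s z /\ ~ C1 z)) as [W [HWnd HW]].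
  { destruct (Hfin t s Hts) as [l Hl]. exists l. intros z [Az _]. exact (Hl z Az). }
  assert (Hsep : forall q, chain q -> hd_error q = Some x -> last q x = v1 ->
                   exists z, In z q /\ In z W).
  { intros q Hc Hh Hl.
    destruct (chain_between_components_meets_adhesion H T bag r t s Y C1 C2 Htd HY
                Hc1 Hc2 Hneq q x x Hc Hh C2x) as [z [Iz Wz]]; [now rewrite Hl|].
    exists z. split; [exact Iz | now apply HW]. }
  assert (HxW : ~ In x W) by (intros Ix; apply NAx, HW, Ix).
  assert (Hv1W : ~ In v1 W) by (intros Iv; apply HW in Iv; tauto).
  destruct (Hlean s s (x :: W) (v1 :: W)) as [Hpaths|[p [Hp [p1 [p2 [a [b [Ep _]]]]]]]].
  - now constructor.
  - now constructor.
  - intros z [<-|Iz]; [exact Bx | apply HW in Iz; apply Iz].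
  - intros z [<-|Iz]; [apply Av1 | apply HW in Iz; apply Iz].
  - reflexivity.
  - pose proof (disjoint_AB_paths_le H _ _ W _
      (AB_path_starts_in_separator H x v1 W HxW Hsep) Hpaths) as Hle.
    simpl in Hle. lia.
  - rewrite (path_from_to_refl T s p Hp) in Ep.
    destruct p1 as [|? [|? ?]]; discriminate.
Qed.
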